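(* Let $\mathcal R$ be a ring of subsets of a set $X$ (closed under finite intersections and finite unions) with $\mathcal R\subseteq\mathcal R_{seq}$. Then for every sequence $\{U_n:n\in\omega\}\subseteq\mathcal R$, the union $\bigcup_{n\in\omega}U_n$ belongs to $\mathcal R_{seq}$.
   Context: $\mathcal R_{seq}$ is the family of all sets $W$ for which there exist sequences $\{U_n\}_{n\in\omega}\subseteq\mathcal R$ and $\{V_n\}_{n\in\omega}\subseteq\mathcal R$ with $U_k\subseteq X\setminus V_k\subseteq U_{k+1}$ for every $k\in\omega$ and $\bigcup_nU_n=W$. *)

From mathcomp Require Import all_boot.
From mathcomp Require Import boolp classical_sets.
Set Implicit Arguments.
Unset Strict Implicit.
Unset Printing Implicit Defensive.
Local Open Scope classical_set_scope.

(* A ring of subsets of X (here X is the whole type T): a family closed under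
   (binary, hence all nonempty finite) intersections and unions. *)
Definition ring_of_sets (T : Type) (R : set (set T)) : Prop :=
  (forall A B, R A -> R B -> R (A `&` B)) /\
  (forall A B, R A -> R B -> R (A `|` B)).

Definition Rseq (T : Type) (R : set (set T)) : set (set T) :=
  [set W | exists (U V : nat -> set T),
     (forall n, R (U n)) /\ (forall n, R (V n)) /\
     (forall k, U k `<=` ~` V k /\ ~` V k `<=` U k.+1) /\
     \bigcup_n U n = W].

From mathcomp Require Import all_boot.
From mathcomp Require Import boolp classical_sets.

Set Implicit Arguments.
Unset Strict Implicit.
Unset Printing Implicit Defensive.
Local Open Scope classical_set_scope.

(* Choose witnesses (U n k)_k, (V n k)_k of U n in R_seq for every n and merge
   them diagonally: W k is the union of U n k over n <= k and Z k the
   intersection of V n k over n <= k.  Both lie in R because only finitely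
   many sets are combined; W k <= ~ Z k <= W k.+1 holds termwise; and since
   each chain U n is increasing, the W k exhaust the union of all U n k. *)

Section RingOfSets.
Variables (T : Type) (R : set (set T)).
Hypothesis ringR : ring_of_sets R.

Lemma ring_bigcup_ord n (F : nat -> set T) :
  (forall i, R (F i)) -> R (\bigcup_(i < n.+1) F i).
Proof.
move=> RF; rewrite bigcup_mkord; elim: n => [|n IHn].
  by rewrite big_ord1.
by rewrite big_ord_recr; apply: ringR.2.
Qed.

Lemma ring_bigcap_ord n (F : nat -> set T) :
  (forall i, R (F i)) -> R (\bigcap_(i < n.+1) F i).
Proof.
move=> RF; rewrite bigcap_mkord; elim: n => [|n IHn].
  by rewrite big_ord1.
by rewrite big_ord_recr; apply: ringR.1.
Qed.

End RingOfSets.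

Definition interlaced (T : Type) (U V : nat -> set T) : Prop :=
  forall k, U k `<=` ~` V k /\ ~` V k `<=` U k.+1.

Lemma interlaced_nondecreasing (T : Type) (U V : nat -> set T) :
  interlaced U V -> {homo U : k j / (k <= j)%N >-> k `<=` j}.
Proof.
move=> UV; apply: homo_leq => [A|B A C|k].
- exact: subset_refl.
- exact: subset_trans.
- exact: subset_trans (UV k).1 (UV k).2.
Qed.

Section DiagonalMerge.
Variables (T : Type) (U V : nat -> nat -> set T).

Definition diag_bigcup k := \bigcup_(n < k.+1) U n k.
Definition diag_bigcap k := \bigcap_(n < k.+1) V n k.

Lemma interlaced_diag :
  (forall n, interlaced (U n) (V n)) -> interlaced diag_bigcup diag_bigcap.
Proof.
move=> UV k; split => x.
  by move=> [n nk Unx] Vx; apply: (UV n k).1 Unx (Vx n nk).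
move=> /existsNP[n /not_implyP[nk Vnx]].
by exists n; [exact: ltnW | exact: (UV n k).2].
Qed.

Lemma bigcup_diag : (forall n, {homo U n : k j / (k <= j)%N >-> k `<=` j}) ->
  \bigcup_k diag_bigcup k = \bigcup_n \bigcup_k U n k.
Proof.
move=> Umono; rewrite eqEsubset; split => x.
  by move=> [k _ [n _ Unx]]; exists n => //; exists k.
move=> [n _ [k _ Unx]]; exists (maxn n k) => //; exists n.
  by rewrite /= ltnS leq_maxl.
exact: Umono _ _ _ (leq_maxr n k) _ Unx.
Qed.

End DiagonalMerge.

Theorem lemma2 (T : Type) (R : set (set T)) :
  ring_of_sets R -> R `<=` Rseq R ->
  forall U : nat -> set T, (forall n, R (U n)) ->
  Rseq R (\bigcup_n U n).
Proof.
move=> ringR RRseq U RU.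
have /choice[UV hUV] : forall n, exists UVn : (nat -> set T) * (nat -> set T),
    [/\ forall k, R (UVn.1 k), forall k, R (UVn.2 k),
        interlaced UVn.1 UVn.2 & \bigcup_k UVn.1 k = U n].
  move=> n; have [Un [Vn [RUn [RVn [UVn <-]]]]] := RRseq _ (RU n).
  by exists (Un, Vn).
pose Uc n := (UV n).1; pose Vc n := (UV n).2.
have RUc n : forall k, R (Uc n k) by have [] := hUV n.
have RVc n : forall k, R (Vc n k) by have [] := hUV n.
have UVc n : interlaced (Uc n) (Vc n) by have [] := hUV n.
have bigcup_Uc n : \bigcup_k Uc n k = U n by have [] := hUV n.
exists (diag_bigcup Uc), (diag_bigcap Vc); split; [|split; [|split]].
- by move=> k; apply: ring_bigcup_ord.
- by move=> k; apply: ring_bigcap_ord.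
- exact: interlaced_diag.
- rewrite bigcup_diag => [|n]; last exact: interlaced_nondecreasing (UVc n).
  by apply: eq_bigcupr => n _.
Qed.
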